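(* Let $G$ be a group (identity $e$), $H$ an abelian group (written additively), and $f:G\to H$ satisfy $f(xy)+f(xy^{-1})=2f(x)$ for all $x,y\in G$, with $f(e)=0$. If $g\in G$ can be written as a product of involutions (elements $i$ with $i^2=e$), then $2f(g)=0$. In particular, if $G$ is generated by involutions, then $2f(g)=0$ for all $g\in G$. *)

From Stdlib Require List.
From HB Require Import structures.
From mathcomp Require Import all_boot all_algebra.
Set Implicit Arguments. Unset Strict Implicit. Unset Printing Implicit Defensive.
Import GRing.Theory.

Definition is_group (G : Type) (mul : G -> G -> G) (inv : G -> G) (e : G) : Prop :=
  [/\ (forall x y z, mul x (mul y z) = mul (mul x y) z),
      (forall x, mul e x = x), (forall x, mul x e = x),
      (forall x, mul (inv x) x = e) & (forall x, mul x (inv x) = e)].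

Definition gprod (G : Type) (mul : G -> G -> G) (e : G) (s : seq G) : G :=
  foldr mul e s.

Definition involution (G : Type) (mul : G -> G -> G) (e : G) (i : G) : Prop :=
  mul i i = e.

Definition prod_of_involutions (G : Type) (mul : G -> G -> G) (e : G) (g : G) : Prop :=
  exists s : seq G, (forall i, List.In i s -> involution mul e i) /\ g = gprod mul e s.

Definition generated_by (G : Type) (mul : G -> G -> G) (inv : G -> G) (e : G)
  (P : G -> Prop) : Prop :=
  forall g : G, exists w : seq (G * bool),
    (forall p, List.In p w -> P p.1) /\
    g = gprod mul e (map (fun p => if p.2 then p.1 else inv p.1) w).

From HB Require Import structures.
From mathcomp Require Import all_boot all_algebra.
Import GRing.Theory.
Set Implicit Arguments. Unset Strict Implicit. Unset Printing Implicit Defensive.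
Local Open Scope ring_scope.

(* Taking x = e in the functional equation shows that f is odd.  For an
   involution i (so i^-1 = i) the equation at (x, i) reads 2 f(x i) = 2 f(x),
   and oddness transfers this to 2 f(i x) = 2 f(x).  Peeling the involutions
   off a product one at a time leaves 2 f(e) = 0. *)

Section GroupFacts.

Variables (G : Type) (mul : G -> G -> G) (inv : G -> G) (e : G).
Hypotheses (mulgA : forall x y z, mul x (mul y z) = mul (mul x y) z)
           (mul1g : forall x, mul e x = x) (mulg1 : forall x, mul x e = x)
           (mulVg : forall x, mul (inv x) x = e) (mulgV : forall x, mul x (inv x) = e).

Lemma inv_eq_of_mul_eq1 a b : mul a b = e -> inv b = a.
Proof. by move=> ab1; rewrite -[inv b]mul1g -ab1 -mulgA mulgV mulg1. Qed.

Lemma inv_involution i : involution mul e i -> inv i = i.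
Proof. exact: inv_eq_of_mul_eq1. Qed.

Lemma invMg a b : inv (mul a b) = mul (inv b) (inv a).
Proof. by apply: inv_eq_of_mul_eq1; rewrite -mulgA (mulgA (inv a)) mulVg mul1g. Qed.

Lemma prod_of_involutions_generated :
  generated_by mul inv e (involution mul e) ->
  forall g, prod_of_involutions mul e g.
Proof.
move=> gen g; have [w [w_inv ->]] := gen g.
exists (map (fun p => if p.2 then p.1 else inv p.1) w); split=> // i.
case/List.in_map_iff=> [[x b] [<- xb_w]]; have /= x_inv := w_inv _ xb_w.
by case: b {xb_w}; rewrite //= /involution inv_involution.
Qed.

Variables (H : zmodType) (f : G -> H).
Hypotheses (hf : forall x y, f (mul x y) + f (mul x (inv y)) = f x *+ 2)
           (f_e : f e = 0).

Lemma f_inv y : f (inv y) = - f y.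
Proof.
apply/eqP; rewrite -addr_eq0 addrC.
by have := hf e y; rewrite !mul1g f_e mul0rn => ->.
Qed.

Lemma f2_mul_involution x i : involution mul e i -> f (mul x i) *+ 2 = f x *+ 2.
Proof. by move=> ii; rewrite -(hf x i) inv_involution // mulr2n. Qed.

Lemma f2_involution_mul x i : involution mul e i -> f (mul i x) *+ 2 = f x *+ 2.
Proof.
move=> ii; have -> : f (mul i x) = - f (mul (inv x) i).
  by rewrite -{2}(inv_involution ii) -invMg f_inv opprK.
by rewrite mulNrn f2_mul_involution // f_inv mulNrn opprK.
Qed.

Lemma f2_prod_of_involutions g : prod_of_involutions mul e g -> f g *+ 2 = 0.
Proof.
case=> s [s_inv ->]; elim: s s_inv => [|i s IHs] s_inv /=; first by rewrite f_e mul0rn.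
rewrite f2_involution_mul; last by apply: s_inv; left.
by apply: IHs => j js; apply: s_inv; right.
Qed.

End GroupFacts.

Theorem mainTheorem3 (G : Type) (mul : G -> G -> G) (inv : G -> G) (e : G)
  (H : zmodType) (f : G -> H)
  (hG : is_group mul inv e)
  (hf : forall x y : G, f (mul x y) + f (mul x (inv y)) = f x *+ 2)
  (he : f e = 0) :
  (forall g : G, prod_of_involutions mul e g -> f g *+ 2 = 0) /\
  (generated_by mul inv e (involution mul e) -> forall g : G, f g *+ 2 = 0).
Proof.
case: hG => mulgA mul1g mulg1 mulVg mulgV.
have f2_prod := f2_prod_of_involutions mulgA mul1g mulg1 mulVg mulgV hf he.
split=> // gen g; apply: f2_prod.
exact: (prod_of_involutions_generated mulgA mul1g mulg1 mulgV gen).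
Qed.
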